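(* For every $n\ge0$, the map $\preceq\mapsto M_\preceq$ is a bijection from the set of $\{\mathbf{3},\mathbf{2}+\mathbf{2}\}$-free naturally labelled posets on $[n]$ onto the set of upper-triangular $n\times n$ binary matrices $M$ that satisfy the following conditions. (i) $M(i,i)=1$ for all $i$. (ii) (no $M_0$) There are no $i<j<k$ with $M(i,j)=M(j,k)=1$. (iii) (no $M_1$) There are no $a<b<c<d$ with $M(a,b)=1$, $M(a,c)=0$, $M(a,d)=0$, $M(b,c)=0$, $M(b,d)=0$, $M(c,d)=1$. (iv) (no $M_2$) There are no $a<b<c<d$ with $M(a,b)=0$, $M(a,c)=1$, $M(a,d)=0$, $M(b,c)=0$, $M(b,d)=1$, $M(c,d)=0$. (v) (no $M_3$) There are no $a<b<c<d$ with $M(a,b)=0$, $M(a,c)=0$, $M(a,d)=1$, $M(b,c)=1$, $M(b,d)=0$, $M(c,d)=0$. In conditions (iii)–(v) the entry $M(a,a)$ is unrestricted. Conditions (ii)–(v) say that $M$ avoids the partial submatrices $M_0=\begin{pmatrix}1&\ast\\1&1\end{pmatrix}$ on rows $i<j$ and columns $j<k$, and $M_1=\begin{pmatrix}1&0&0\\1&0&0\\\ast&1&1\end{pmatrix}$, $M_2=\begin{pmatrix}0&1&0\\1&0&1\\\ast&1&0\end{pmatrix}$, $M_3=\begin{pmatrix}0&0&1\\1&1&0\\\ast&1&0\end{pmatrix}$ on rows $a<b<c$ and columns $b<c<d$, where $\ast$ marks an unconstrained entry. In each case the lower-left specified entries lie on the main diagonal.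
   Context: A partial order $\preceq$ on $[n]$ is naturally labelled if $x\prec y$ implies $x<y$. It is $\mathbf{3}$-free if there are no $x\prec y\prec z$. It is $(\mathbf{2}+\mathbf{2})$-free if there are no four distinct elements $i\prec j$, $k\prec \ell$ with each of $i,j$ incomparable to each of $k,\ell$. It is $\{\mathbf{3},\mathbf{2}+\mathbf{2}\}$-free if it is both. The incidence matrix $M_\preceq$ has $M_\preceq(i,j)=1$ if and only if $i\preceq j$. *)

From mathcomp Require Import all_boot all_algebra.
Set Implicit Arguments. Unset Strict Implicit. Unset Printing Implicit Defensive.

Definition is_poset (n : nat) (R : rel 'I_n) : Prop :=
  [/\ (forall x, R x x),
      (forall x y, R x y -> R y x -> x = y) &
      (forall x y z, R x y -> R y z -> R x z)].

Definition sprec (n : nat) (R : rel 'I_n) (x y : 'I_n) : bool := R x y && (x != y).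

Definition naturally_labelled (n : nat) (R : rel 'I_n) : Prop :=
  forall x y : 'I_n, sprec R x y -> (x < y)%N.

Definition three_free (n : nat) (R : rel 'I_n) : Prop :=
  ~ exists x y z : 'I_n, sprec R x y /\ sprec R y z.

Definition incomparable (n : nat) (R : rel 'I_n) (x y : 'I_n) : bool :=
  ~~ R x y && ~~ R y x.

Definition two_plus_two_free (n : nat) (R : rel 'I_n) : Prop :=
  ~ exists i j k l : 'I_n,
      [/\ uniq [:: i; j; k; l], sprec R i j, sprec R k l &
          [/\ incomparable R i k, incomparable R i l,
              incomparable R j k & incomparable R j l]].

Definition good_poset (n : nat) (R : rel 'I_n) : Prop :=
  [/\ is_poset R, naturally_labelled R, three_free R & two_plus_two_free R].

(* incidence matrix: M(i,j) = 1 iff i ⪯ j; binary matrices are 'M[bool]_n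
   with true = 1, false = 0 *)
Definition incidence (n : nat) (R : rel 'I_n) : 'M[bool]_n :=
  \matrix_(i, j) R i j.

Definition upper_triangular (n : nat) (M : 'M[bool]_n) : Prop :=
  forall i j : 'I_n, (j < i)%N -> M i j = false.

Definition good_matrix (n : nat) (M : 'M[bool]_n) : Prop :=
  [/\ upper_triangular M,
      (forall i, M i i = true),
      (forall i j k : 'I_n, (i < j)%N -> (j < k)%N -> ~ (M i j /\ M j k)),
      (forall a b c d : 'I_n, (a < b)%N -> (b < c)%N -> (c < d)%N ->
         ~ [/\ M a b, ~~ M a c, ~~ M a d & [/\ ~~ M b c, ~~ M b d & M c d]]) &
      [/\
      (forall a b c d : 'I_n, (a < b)%N -> (b < c)%N -> (c < d)%N ->
         ~ [/\ ~~ M a b, M a c, ~~ M a d & [/\ ~~ M b c, M b d & ~~ M c d]]) &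
      (forall a b c d : 'I_n, (a < b)%N -> (b < c)%N -> (c < d)%N ->
         ~ [/\ ~~ M a b, ~~ M a c, M a d & [/\ M b c, ~~ M b d & ~~ M c d]])]].

From mathcomp Require Import all_boot all_algebra.
From mathcomp Require Import zify.
Set Implicit Arguments. Unset Strict Implicit.

(* In a naturally labelled order the incidence matrix is upper triangular with
   unit diagonal, and its off-diagonal ones are exactly the strict relations.
   Being 3-free is the absence of M0; conversely a matrix without M0 has no
   strict chains x < y < z, so the relation it defines is transitive for free.
   A (2+2) i < j, k < l with i < k comes in one of three shapes according to
   the position of j relative to k < l: j < k, k < j < l or l < j.  On the rows
   and columns of the four points these are precisely M1, M2 and M3. *)

Lemma uniq4_ord n (a b c d : 'I_n) :
  (a : nat) <> b -> (a : nat) <> c -> (a : nat) <> d ->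
  (b : nat) <> c -> (b : nat) <> d -> (c : nat) <> d ->
  uniq [:: a; b; c; d].
Proof.
move=> ab ac ad bc bd cd; rewrite /= !inE !negb_or.
by rewrite -!(inj_eq val_inj) /= !(introN eqP).
Qed.

Section NaturallyLabelled.

Variables (n : nat) (R : rel 'I_n).
Hypothesis natR : naturally_labelled R.

Lemma naturally_labelled_le (x y : 'I_n) : R x y -> (x <= y)%N.
Proof.
move=> Rxy; case: (eqVneq x y) => [->//|neq_xy].
by apply/ltnW/natR; rewrite /sprec Rxy neq_xy.
Qed.

Lemma naturally_labelled_gtF (x y : 'I_n) : (y < x)%N -> R x y = false.
Proof. by move=> lt_yx; apply/negbTE/negP => /naturally_labelled_le; lia. Qed.

Lemma sprec_ltn (x y : 'I_n) : (x < y)%N -> R x y -> sprec R x y.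
Proof. by move=> lt_xy Rxy; rewrite /sprec Rxy -(inj_eq val_inj) /=; apply/eqP; lia. Qed.

Lemma incomparable_ltn (x y : 'I_n) : (x < y)%N -> ~~ R x y -> incomparable R x y.
Proof. by move=> lt_xy nRxy; rewrite /incomparable nRxy naturally_labelled_gtF. Qed.

Lemma incomparable_gtn (x y : 'I_n) : (y < x)%N -> ~~ R y x -> incomparable R x y.
Proof. by move=> lt_yx nRyx; rewrite /incomparable nRyx naturally_labelled_gtF. Qed.

End NaturallyLabelled.

Section GoodPosetIncidence.

Variables (n : nat) (R : rel 'I_n).
Hypothesis goodR : good_poset R.

Lemma two_plus_two_lt (i j k l : 'I_n) :
  uniq [:: i; j; k; l] -> (i < j)%N -> (k < l)%N -> R i j -> R k l ->
  [/\ incomparable R i k, incomparable R i l,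
      incomparable R j k & incomparable R j l] -> False.
Proof.
case: goodR => _ natR _ tptR uniq_ijkl lt_ij lt_kl Rij Rkl incomp.
by apply: tptR; exists i, j, k, l; split; rewrite ?sprec_ltn.
Qed.

Lemma good_poset_incidence : good_matrix (incidence R).
Proof.
have [[reflR _ _] natR threeR _] := goodR.
have inc := incomparable_ltn natR; have cni := incomparable_gtn natR.
split.
- by move=> i j lt_ji; rewrite mxE naturally_labelled_gtF.
- by move=> i; rewrite mxE reflR.
- move=> i j k lt_ij lt_jk; rewrite !mxE => -[Rij Rjk].
  by apply: threeR; exists i, j, k; rewrite !sprec_ltn.
- move=> a b c d lt_ab lt_bc lt_cd; rewrite !mxE => -[Rab nRac nRad [nRbc nRbd Rcd]].
  apply: (@two_plus_two_lt a b c d) => //; first by apply: uniq4_ord; lia.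
  split; apply: inc => //; lia.
split.
- move=> a b c d lt_ab lt_bc lt_cd; rewrite !mxE => -[nRab Rac nRad [nRbc Rbd nRcd]].
  apply: (@two_plus_two_lt a c b d) => //; try lia; first by apply: uniq4_ord; lia.
  split; [apply: inc | apply: inc | apply: cni | apply: inc] => //; lia.
- move=> a b c d lt_ab lt_bc lt_cd; rewrite !mxE => -[nRab nRac Rad [Rbc nRbd nRcd]].
  apply: (@two_plus_two_lt a d b c) => //; try lia; first by apply: uniq4_ord; lia.
  split; [apply: inc | apply: inc | apply: cni | apply: cni] => //; lia.
Qed.

End GoodPosetIncidence.

Lemma incidence_inj n (R1 R2 : rel 'I_n) : incidence R1 = incidence R2 -> R1 =2 R2.
Proof. by move=> /matrixP eqR x y; have := eqR x y; rewrite !mxE. Qed.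

Section GoodMatrixPoset.

Variables (n : nat) (M : 'M[bool]_n).
Hypothesis goodM : good_matrix M.

Let R : rel 'I_n := fun x y => M x y.

Lemma good_matrix_le (x y : 'I_n) : M x y -> (x <= y)%N.
Proof.
have [utM _ _ _ _] := goodM.
by move=> Mxy; case: leqP => // lt_yx; rewrite utM in Mxy.
Qed.

Lemma good_matrix_sprec_ltn (x y : 'I_n) : sprec R x y -> (x < y)%N.
Proof.
move=> /andP[/good_matrix_le le_xy]; rewrite -(inj_eq val_inj) /=; lia.
Qed.

Lemma good_matrix_naturally_labelled : naturally_labelled R.
Proof. exact: good_matrix_sprec_ltn. Qed.

Lemma good_matrix_three_free : three_free R.
Proof.
have [_ _ noM0 _ _] := goodM.
move=> [x [y [z [sxy syz]]]].
apply: (noM0 x y z); [exact: good_matrix_sprec_ltn | exact: good_matrix_sprec_ltn |].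
by case/andP: sxy; case/andP: syz.
Qed.

Lemma good_matrix_poset : is_poset R.
Proof.
have [_ diagM noM0 _ _] := goodM.
split=> [x | x y Mxy Myx | x y z Mxy Myz]; first exact: diagM.
  by apply/val_inj/eqP; rewrite eqn_leq !good_matrix_le.
case: (eqVneq x y) => [->//|nxy]; case: (eqVneq y z) => [<-//|nyz].
exfalso; apply: (noM0 x y z); last by split.
  by apply: good_matrix_sprec_ltn; rewrite /sprec Mxy.
by apply: good_matrix_sprec_ltn; rewrite /sprec Myz.
Qed.

Lemma good_matrix_no_two_plus_two (i j k l : 'I_n) :
  (i < j)%N -> (k < l)%N -> (i < k)%N -> (j : nat) <> k -> (j : nat) <> l ->
  M i j -> M k l -> incomparable R i k -> incomparable R i l ->
  incomparable R j k -> incomparable R j l -> False.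
Proof.
have [_ _ _ noM1 [noM2 noM3]] := goodM.
move=> lt_ij lt_kl lt_ik jk jl Mij Mkl /andP[nMik _] /andP[nMil _]
  /andP[nMjk nMkj] /andP[nMjl nMlj].
case: (ltnP j k) => [lt_jk | le_kj]; first by apply: (noM1 i j k l).
case: (ltnP j l) => [lt_jl | le_lj]; first by apply: (noM2 i k j l) => //; lia.
by apply: (noM3 i k l j) => //; lia.
Qed.

Lemma good_matrix_two_plus_two_free : two_plus_two_free R.
Proof.
move=> [i [j [k [l [uniq_ijkl sij skl [Iik Iil Ijk Ijl]]]]]].
move: uniq_ijkl; rewrite /= !inE !negb_or -!(inj_eq val_inj) /=.
case/and4P=> /and3P[_ /eqP ik /eqP il] /andP[/eqP jk /eqP jl] _ _.
have lt_ij := good_matrix_sprec_ltn sij; have lt_kl := good_matrix_sprec_ltn skl.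
case/andP: sij => Mij _; case/andP: skl => Mkl _.
have incC x y : incomparable R x y -> incomparable R y x by rewrite /incomparable andbC.
case: (ltnP i k) => [lt_ik | le_ki].
  exact: (good_matrix_no_two_plus_two lt_ij lt_kl lt_ik jk jl).
have lt_ki : (k < i)%N by lia.
have li : (l : nat) <> i by move=> /esym /il.
have lj : (l : nat) <> j by move=> /esym /jl.
by apply: (good_matrix_no_two_plus_two lt_kl lt_ij lt_ki) => //; apply: incC.
Qed.

Lemma good_matrix_good_poset : good_poset R.
Proof.
split; [exact: good_matrix_poset | exact: good_matrix_naturally_labelled
       | exact: good_matrix_three_free | exact: good_matrix_two_plus_two_free].
Qed.

Lemma incidence_matrix_rel : incidence R = M.
Proof. by apply/matrixP => x y; rewrite mxE. Qed.

End GoodMatrixPoset.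

Theorem proposition6 (n : nat) :
  [/\ (forall R : rel 'I_n, good_poset R -> good_matrix (incidence R)),
      (forall R1 R2 : rel 'I_n, good_poset R1 -> good_poset R2 ->
         incidence R1 = incidence R2 -> R1 =2 R2) &
      (forall M : 'M[bool]_n, good_matrix M ->
         exists2 R : rel 'I_n, good_poset R & incidence R = M)].
Proof.
split.
- exact: good_poset_incidence.
- by move=> R1 R2 _ _; apply: incidence_inj.
- move=> M goodM; exists (fun x y => M x y).
    exact: good_matrix_good_poset.
  exact: incidence_matrix_rel.
Qed.
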